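(* Let $f\in\mathrm{SL}(2,\mathbb{Z})$ be Anosov and let $l=l_{\mathcal{C}}(f)$ be its stable translation length on the Farey graph. Then \[|\operatorname{tr} f|\ \ge\ \operatorname{tr}\big(\mathcal{M}(2)^l\big)=(1+\sqrt2)^l+(1-\sqrt2)^l,\qquad \mathcal{M}(2)=\begin{pmatrix}2&1\\1&0\end{pmatrix}.\]
   Context: $f$ is Anosov if $|\operatorname{tr} f|>2$. The Farey graph has vertex set $\mathbb{Q}\cup\{\infty\}$ (vertices $p/q$ in lowest terms), $p/q$ and $r/s$ adjacent iff $|ps-qr|=1$, path metric $d_{\mathcal{C}}$ with unit edges; $\begin{pmatrix}a&b\\c&d\end{pmatrix}$ acts by $p/q\mapsto(ap+bq)/(cp+dq)$; $l_{\mathcal{C}}(f)=\liminf_{j\to\infty}d_{\mathcal{C}}(v,f^j v)/j$ for any vertex $v$. *)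

From Stdlib Require Import Reals ZArith.
Open Scope Z_scope.

Record mat2 := Mat2 { ma : Z; mb : Z; mc : Z; md : Z }.

Definition mat2_mul (M N : mat2) : mat2 :=
  Mat2 (ma M * ma N + mb M * mc N) (ma M * mb N + mb M * md N)
       (mc M * ma N + md M * mc N) (mc M * mb N + md M * md N).

Definition mat2_id : mat2 := Mat2 1 0 0 1.

Fixpoint mat2_pow (M : mat2) (n : nat) : mat2 :=
  match n with O => mat2_id | S k => mat2_mul M (mat2_pow M k) end.

Definition mat2_det (M : mat2) : Z := ma M * md M - mb M * mc M.
Definition mat2_tr (M : mat2) : Z := ma M + md M.

Definition in_SL2Z (M : mat2) : Prop := mat2_det M = 1.
Definition anosov (M : mat2) : Prop := Z.abs (mat2_tr M) > 2.

Definition M2 : mat2 := Mat2 2 1 1 0.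

(* Farey graph.  A vertex p/q (in lowest terms) of Q ∪ {∞} is encoded as a
   pair (p,q) with gcd p q = 1 and q > 0, or the pair (1,0) for ∞. *)
Definition is_vertex (v : Z * Z) : Prop :=
  Z.gcd (fst v) (snd v) = 1 /\ (0 < snd v \/ v = (1, 0)).

Definition infty : Z * Z := (1, 0).

Definition farey_adj (v w : Z * Z) : Prop :=
  is_vertex v /\ is_vertex w /\ Z.abs (fst v * snd w - snd v * fst w) = 1.

Inductive farey_path : nat -> Z * Z -> Z * Z -> Prop :=
| fp_nil : forall v, is_vertex v -> farey_path O v v
| fp_cons : forall n u v w, farey_adj u v -> farey_path n v w ->
    farey_path (S n) u w.

Definition farey_dist (v w : Z * Z) (n : nat) : Prop :=
  farey_path n v w /\ forall m, farey_path m v w -> (n <= m)%nat.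

Definition normalize (v : Z * Z) : Z * Z :=
  let (x, y) := v in
  if y <? 0 then (- x, - y) else if y =? 0 then (Z.abs x, 0) else (x, y).

Definition mat2_act (M : mat2) (v : Z * Z) : Z * Z :=
  normalize (ma M * fst v + mb M * snd v, mc M * fst v + md M * snd v).

Open Scope R_scope.

Definition is_liminf (u : nat -> R) (l : R) : Prop :=
  (forall eps, eps > 0 -> exists N, forall j, (j >= N)%nat -> u j > l - eps) /\
  (forall eps, eps > 0 -> forall N, exists j, (j >= N)%nat /\ u j < l + eps).

(* l_C(f) = liminf_{j->oo} d_C(v, f^j v) / j, computed at the vertex v = ∞ *)
Definition stable_translation_length (f : mat2) (l : R) : Prop :=
  exists d : nat -> nat,
    (forall j, farey_dist infty (Nat.iter j (mat2_act f) infty) (d j)) /\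
    is_liminf (fun j => INR (d j) / INR j) l.

From Stdlib Require Import Reals ZArith Lia Psatz List.
Import ListNotations.

(* Since -f acts like f we may assume tr f >= 3.  A Euclidean-type reduction
   (translations T^k to centre the diagonal, the rotation S to shrink the
   lower-left entry) conjugates f, by some g moving infty a finite distance
   e, to a nonnegative unimodular matrix A, which is a positive word w in
   R = (1 1; 0 1) and L = (1 0; 1 1).  For a positive word the two columns
   are adjacent Farey vertices, appending a letter replaces one column by
   their mediant, and the columns separate infty from the mediant; hence the
   distances from infty to the columns obey the two-counter recursion [run].
   The orbit of infty under A consists of first columns of powers of w, the
   recursion becomes a pure shift by some n after two periods, and the orbit
   of f stays within 2e of that of A: so l = n.  The same recursion gives
   Pell lower bounds on the entries of w, whence tr A >= tr M(2)^n, and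
   Binet's formula evaluates tr M(2)^n. *)

Open Scope Z_scope.

Lemma mat2_ext (M N : mat2) :
  ma M = ma N -> mb M = mb N -> mc M = mc N -> md M = md N -> M = N.
Proof. destruct M, N; simpl; intros; subst; reflexivity. Qed.

Ltac mat_eq := apply mat2_ext; unfold mat2_mul, mat2_id; cbn [ma mb mc md]; ring.

Lemma mat2_mul_assoc (M N P : mat2) :
  mat2_mul M (mat2_mul N P) = mat2_mul (mat2_mul M N) P.
Proof. destruct M, N, P; mat_eq. Qed.

Lemma mat2_mul_id_l (M : mat2) : mat2_mul mat2_id M = M.
Proof. destruct M; mat_eq. Qed.

Lemma mat2_mul_id_r (M : mat2) : mat2_mul M mat2_id = M.
Proof. destruct M; mat_eq. Qed.

Lemma mat2_det_mul (M N : mat2) :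
  mat2_det (mat2_mul M N) = mat2_det M * mat2_det N.
Proof. destruct M, N; unfold mat2_det; simpl; ring. Qed.

Lemma mat2_tr_comm (M N : mat2) :
  mat2_tr (mat2_mul M N) = mat2_tr (mat2_mul N M).
Proof. destruct M, N; unfold mat2_tr, mat2_mul; simpl; ring. Qed.

(** ** The action of SL(2,Z) on the Farey graph *)

Definition mat2_vec (M : mat2) (v : Z * Z) : Z * Z :=
  (ma M * fst v + mb M * snd v, mc M * fst v + md M * snd v).

Lemma mat2_act_vec (M : mat2) (v : Z * Z) :
  mat2_act M v = normalize (mat2_vec M v).
Proof. reflexivity. Qed.

Lemma mat2_vec_mul (M N : mat2) (v : Z * Z) :
  mat2_vec (mat2_mul M N) v = mat2_vec M (mat2_vec N v).
Proof. destruct M, N, v; unfold mat2_vec; simpl; f_equal; ring. Qed.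

Lemma normalize_cases (x y : Z) :
  normalize (x, y) = (x, y) \/ normalize (x, y) = (- x, - y).
Proof.
  unfold normalize.
  destruct (y <? 0); [right; reflexivity |].
  destruct (Z.eqb_spec y 0) as [-> | _]; [| left; reflexivity].
  destruct (Z.abs_spec x) as [[_ ->] | [_ ->]]; [left | right]; f_equal; lia.
Qed.

Lemma normalize_opp (x y : Z) : normalize (- x, - y) = normalize (x, y).
Proof.
  unfold normalize.
  destruct (Z.ltb_spec y 0), (Z.ltb_spec (- y) 0), (Z.eqb_spec y 0), (Z.eqb_spec (- y) 0);
    try lia; f_equal; lia.
Qed.

Lemma normalize_vertex (v : Z * Z) : is_vertex v -> normalize v = v.
Proof.
  destruct v as [p q]; intros [_ [Hq | Hq]]; unfold normalize; simpl in *.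
  - destruct (Z.ltb_spec q 0), (Z.eqb_spec q 0); try lia; reflexivity.
  - injection Hq as -> ->; reflexivity.
Qed.

Lemma normalize_coprime_vertex (x y : Z) :
  Z.gcd x y = 1 -> is_vertex (normalize (x, y)).
Proof.
  intros H; unfold normalize, is_vertex.
  destruct (Z.ltb_spec y 0); [| destruct (Z.eqb_spec y 0) as [-> |]]; simpl.
  - rewrite Z.gcd_opp_l, Z.gcd_opp_r; split; [assumption | left; lia].
  - rewrite Z.gcd_0_r in H; rewrite H; split; [reflexivity | right; reflexivity].
  - split; [assumption | left; lia].
Qed.

(* Unimodular matrices preserve coprimality (transport a Bezout relation). *)
Lemma mat2_vec_coprime (M : mat2) (p q : Z) :
  mat2_det M = 1 -> Z.gcd p q = 1 ->
  Z.gcd (fst (mat2_vec M (p, q))) (snd (mat2_vec M (p, q))) = 1.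
Proof.
  destruct M as [a b c d]; unfold mat2_det, mat2_vec; simpl; intros Hd Hg.
  destruct (Z.gcd_bezout _ _ _ Hg) as [u [v Huv]].
  apply Z.bezout_1_gcd; exists (u * d - v * c), (- u * b + v * a).
  rewrite <- Huv, <- (Z.mul_1_r (u * p)), <- (Z.mul_1_r (v * q)), <- Hd; ring.
Qed.

Lemma act_vertex (M : mat2) (v : Z * Z) :
  mat2_det M = 1 -> is_vertex v -> is_vertex (mat2_act M v).
Proof.
  destruct v as [p q]; intros Hd [Hg _]; rewrite mat2_act_vec.
  pose proof (mat2_vec_coprime M p q Hd Hg) as H.
  destruct (mat2_vec M (p, q)); apply normalize_coprime_vertex, H.
Qed.

Lemma act_mul (M N : mat2) (v : Z * Z) :
  mat2_act (mat2_mul M N) v = mat2_act M (mat2_act N v).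
Proof.
  rewrite !mat2_act_vec, mat2_vec_mul.
  destruct (mat2_vec N v) as [x y].
  destruct (normalize_cases x y) as [-> | ->]; [reflexivity |].
  destruct M as [a b c d]; unfold mat2_vec; cbn [fst snd ma mb mc md].
  rewrite <- normalize_opp; f_equal; f_equal; ring.
Qed.

Lemma act_id (v : Z * Z) : is_vertex v -> mat2_act mat2_id v = v.
Proof.
  intros H; rewrite mat2_act_vec.
  replace (mat2_vec mat2_id v) with v
    by (destruct v; unfold mat2_vec; cbn [fst snd ma mb mc md mat2_id]; f_equal; ring).
  apply normalize_vertex, H.
Qed.

Lemma act_inv (g gi : mat2) (v : Z * Z) :
  mat2_mul gi g = mat2_id -> is_vertex v -> mat2_act gi (mat2_act g v) = v.
Proof. intros H Hv; rewrite <- act_mul, H; apply act_id, Hv. Qed.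

Definition mat2_opp (M : mat2) : mat2 := Mat2 (- ma M) (- mb M) (- mc M) (- md M).

Lemma act_opp (M : mat2) (v : Z * Z) : mat2_act (mat2_opp M) v = mat2_act M v.
Proof.
  destruct M as [a b c d], v as [x y]; rewrite !mat2_act_vec.
  unfold mat2_vec, mat2_opp; cbn [fst snd ma mb mc md].
  rewrite <- normalize_opp; f_equal; f_equal; ring.
Qed.

Lemma infty_vertex : is_vertex infty.
Proof. split; [reflexivity | right; reflexivity]. Qed.

Definition pair_det (v w : Z * Z) : Z := fst v * snd w - snd v * fst w.

Lemma farey_adj_iff (v w : Z * Z) :
  farey_adj v w <-> is_vertex v /\ is_vertex w /\ Z.abs (pair_det v w) = 1.
Proof. reflexivity. Qed.

Lemma pair_det_normalize_l (x y : Z) (w : Z * Z) :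
  Z.abs (pair_det (normalize (x, y)) w) = Z.abs (pair_det (x, y) w).
Proof.
  destruct (normalize_cases x y) as [-> | ->]; [reflexivity |].
  rewrite <- Z.abs_opp; unfold pair_det; simpl; f_equal; ring.
Qed.

Lemma pair_det_normalize_r (x y : Z) (w : Z * Z) :
  Z.abs (pair_det w (normalize (x, y))) = Z.abs (pair_det w (x, y)).
Proof.
  destruct (normalize_cases x y) as [-> | ->]; [reflexivity |].
  rewrite <- Z.abs_opp; unfold pair_det; simpl; f_equal; ring.
Qed.

Lemma pair_det_vec (M : mat2) (v w : Z * Z) :
  pair_det (mat2_vec M v) (mat2_vec M w) = mat2_det M * pair_det v w.
Proof. destruct M, v, w; unfold pair_det, mat2_vec, mat2_det; simpl; ring. Qed.

Lemma act_adj (M : mat2) (v w : Z * Z) :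
  mat2_det M = 1 -> farey_adj v w -> farey_adj (mat2_act M v) (mat2_act M w).
Proof.
  intros Hd (Hv & Hw & H); apply farey_adj_iff.
  split; [apply act_vertex; auto |]; split; [apply act_vertex; auto |].
  rewrite !mat2_act_vec.
  destruct (mat2_vec M v) as [x y] eqn:E1, (mat2_vec M w) as [x' y'] eqn:E2.
  rewrite pair_det_normalize_l, pair_det_normalize_r, <- E1, <- E2, pair_det_vec, Hd.
  rewrite Z.mul_1_l; exact H.
Qed.

Lemma farey_adj_sym (v w : Z * Z) : farey_adj v w -> farey_adj w v.
Proof.
  intros (Hv & Hw & H); apply farey_adj_iff; split; [auto | split; [auto |]].
  rewrite <- H, <- Z.abs_opp; unfold pair_det; f_equal; ring.
Qed.

Lemma path_app (m n : nat) (u v w : Z * Z) :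
  farey_path m u v -> farey_path n v w -> farey_path (m + n) u w.
Proof. intros H; induction H; intros; simpl; [assumption | econstructor; eauto]. Qed.

Lemma path_one (u v : Z * Z) : farey_adj u v -> farey_path 1 u v.
Proof. intros H; econstructor; [exact H | constructor; apply H]. Qed.

Lemma path_rev (n : nat) (u v : Z * Z) : farey_path n u v -> farey_path n v u.
Proof.
  intros H; induction H as [v Hv | n u v w Ha _ IH]; [constructor; assumption |].
  rewrite <- Nat.add_1_r; eapply path_app; [exact IH | apply path_one, farey_adj_sym, Ha].
Qed.

Lemma path_act (M : mat2) (n : nat) (u v : Z * Z) :
  mat2_det M = 1 -> farey_path n u v -> farey_path n (mat2_act M u) (mat2_act M v).
Proof.
  intros Hd H; induction H; [constructor; apply act_vertex; auto |].
  econstructor; [apply act_adj |]; eauto.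
Qed.

Lemma dist_le (u v : Z * Z) (n m : nat) :
  farey_dist u v n -> farey_path m u v -> (n <= m)%nat.
Proof. intros [_ H] Hp; apply H, Hp. Qed.

(** ** Conjugating a hyperbolic matrix to a nonnegative one *)

Definition moves_infty_finitely (g : mat2) : Prop :=
  exists n, farey_path n infty (mat2_act g infty).

Lemma moves_infty_finitely_mul (h g : mat2) :
  mat2_det h = 1 -> moves_infty_finitely h -> moves_infty_finitely g ->
  moves_infty_finitely (mat2_mul h g).
Proof.
  intros Hd [n1 H1] [n2 H2]; exists (n1 + n2)%nat.
  rewrite act_mul; eapply path_app; [exact H1 | apply path_act; auto].
Qed.

Definition Tm (k : Z) : mat2 := Mat2 1 k 0 1.
Definition Sm : mat2 := Mat2 0 (-1) 1 0.
Definition Si : mat2 := Mat2 0 1 (-1) 0.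

Lemma moves_infty_finitely_id : moves_infty_finitely mat2_id.
Proof. exists 0%nat; rewrite act_id by apply infty_vertex; constructor; apply infty_vertex. Qed.

(* Translations fix [infty]. *)
Lemma moves_infty_finitely_T (k : Z) : moves_infty_finitely (Tm k).
Proof.
  exists 0%nat; unfold mat2_act, Tm, infty, mat2_vec; cbn [fst snd ma mb mc md].
  rewrite Z.mul_0_r, Z.add_0_r, Z.mul_1_r; constructor; apply infty_vertex.
Qed.

(* [S] maps [infty] to the neighbour 0/1. *)
Lemma moves_infty_finitely_S : moves_infty_finitely Sm.
Proof.
  exists 1%nat; apply path_one; split; [apply infty_vertex |]; split; [| reflexivity].
  split; [reflexivity | left; simpl; lia].
Qed.

Definition mat2_nonneg (A : mat2) : Prop :=
  0 <= ma A /\ 0 <= mb A /\ 0 <= mc A /\ 0 <= md A.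

Definition conj_nonneg (f : mat2) : Prop :=
  exists g gi A, mat2_mul g gi = mat2_id /\ mat2_mul gi g = mat2_id /\
    mat2_det g = 1 /\ mat2_det gi = 1 /\ f = mat2_mul g (mat2_mul A gi) /\
    mat2_nonneg A /\ mat2_det A = 1 /\ moves_infty_finitely g.

Lemma conj_nonneg_base (A : mat2) : mat2_nonneg A -> mat2_det A = 1 -> conj_nonneg A.
Proof.
  intros H1 H2; exists mat2_id, mat2_id, A.
  rewrite mat2_mul_id_l, mat2_mul_id_r, mat2_mul_id_l.
  repeat (split; [reflexivity || assumption |]); apply moves_infty_finitely_id.
Qed.

Lemma conj_nonneg_conj (M Mi f : mat2) :
  mat2_mul M Mi = mat2_id -> mat2_mul Mi M = mat2_id ->
  mat2_det M = 1 -> mat2_det Mi = 1 -> moves_infty_finitely M ->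
  conj_nonneg f -> conj_nonneg (mat2_mul M (mat2_mul f Mi)).
Proof.
  intros HMMi HMiM HdM HdMi HM (g & gi & A & Hggi & Hgig & Hdg & Hdgi & -> & HA & HdA & Hg).
  exists (mat2_mul M g), (mat2_mul gi Mi), A.
  assert (Hinv : forall X Xi Y Yi, mat2_mul X Xi = mat2_id -> mat2_mul Y Yi = mat2_id ->
    mat2_mul (mat2_mul X Y) (mat2_mul Yi Xi) = mat2_id).
  { intros X Xi Y Yi E1 E2.
    rewrite !mat2_mul_assoc, <- (mat2_mul_assoc X Y Yi), E2, mat2_mul_id_r; exact E1. }
  split; [apply Hinv; assumption |]; split; [apply Hinv; assumption |].
  split; [rewrite mat2_det_mul, HdM, Hdg; reflexivity |].
  split; [rewrite mat2_det_mul, HdMi, Hdgi; reflexivity |].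
  split; [rewrite !mat2_mul_assoc; reflexivity |].
  split; [exact HA |]; split; [exact HdA |].
  apply moves_infty_finitely_mul; assumption.
Qed.

Lemma conj_nonneg_T (k : Z) (f : mat2) :
  conj_nonneg f -> conj_nonneg (mat2_mul (Tm k) (mat2_mul f (Tm (- k)))).
Proof.
  apply conj_nonneg_conj; auto using moves_infty_finitely_T;
    unfold Tm, mat2_det; cbn [ma mb mc md]; try mat_eq; ring.
Qed.

(* The conjugate [S^-1 f S], which exchanges the roles of [mb] and [mc]. *)
Definition sconj (f : mat2) : mat2 := Mat2 (md f) (- mc f) (- mb f) (ma f).

Lemma conj_nonneg_S (f : mat2) : conj_nonneg (sconj f) -> conj_nonneg f.
Proof.
  intros H.
  replace f with (mat2_mul Sm (mat2_mul (sconj f) Si))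
    by (destruct f; unfold Sm, Si, sconj; mat_eq).
  apply conj_nonneg_conj; auto using moves_infty_finitely_S; reflexivity.
Qed.

Lemma sconj_det (f : mat2) : mat2_det (sconj f) = mat2_det f.
Proof. destruct f; unfold mat2_det, sconj; simpl; ring. Qed.

Lemma sconj_tr (f : mat2) : mat2_tr (sconj f) = mat2_tr f.
Proof. destruct f; unfold mat2_tr, sconj; simpl; ring. Qed.

Lemma near_even_multiple (x c : Z) : c <> 0 -> exists k, Z.abs (x - 2 * k * c) <= Z.abs c.
Proof.
  intros Hc; set (C := Z.abs c).
  pose proof (Z.mod_pos_bound (x + C) (2 * C) ltac:(lia)) as Hb.
  pose proof (Z_div_mod_eq_full (x + C) (2 * C)) as He.
  destruct (Z_lt_le_dec 0 c); [exists ((x + C) / (2 * C)) | exists (- ((x + C) / (2 * C)))];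
    unfold C in *; lia.
Qed.

Lemma centering (f : mat2) : mc f <> 0 ->
  exists k f', f = mat2_mul (Tm k) (mat2_mul f' (Tm (- k))) /\ mc f' = mc f /\
    mat2_det f' = mat2_det f /\ mat2_tr f' = mat2_tr f /\
    Z.abs (ma f' - md f') <= Z.abs (mc f').
Proof.
  destruct f as [a b c d]; cbn [mc]; intros Hc.
  destruct (near_even_multiple (a - d) c Hc) as [k Hk].
  exists k, (Mat2 (a - k * c) (b + k * (a - d) - k * k * c) c (d + k * c)).
  unfold Tm, mat2_det, mat2_tr; cbn [ma mb mc md].
  repeat split; try ring; [mat_eq |].
  replace (a - k * c - (d + k * c)) with (a - d - 2 * k * c) by ring; exact Hk.
Qed.

Lemma hyperbolic_mc_nonzero (f : mat2) :
  mat2_det f = 1 -> 3 <= mat2_tr f -> mc f <> 0.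
Proof.
  destruct f as [a b c d]; unfold mat2_det, mat2_tr; cbn [ma mb mc md].
  intros Hd Ht ->; assert (Had : a * d = 1) by lia.
  destruct (Z.eq_mul_1 _ _ Had) as [-> | ->]; lia.
Qed.

(* The
   discriminant identity (a-d)^2 + 4bc = t^2 - 4 drives all cases. *)
Lemma centered_trichotomy (f : mat2) :
  mat2_det f = 1 -> 3 <= mat2_tr f -> mc f <> 0 -> Z.abs (ma f - md f) <= Z.abs (mc f) ->
  mat2_nonneg f \/ mat2_nonneg (sconj f) \/ Z.abs (mb f) < Z.abs (mc f).
Proof.
  destruct f as [a b c d]; unfold mat2_det, mat2_tr, mat2_nonneg, sconj; cbn [ma mb mc md].
  intros Hd Ht Hc He.
  assert (Hdisc : (a - d) * (a - d) + 4 * (b * c) = (a + d) * (a + d) - 4) by nia.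
  assert (Hsq : (a - d) * (a - d) <= c * c)
    by (rewrite <- (Z.abs_square (a - d)), <- (Z.abs_square c); nia).
  destruct (Z_lt_le_dec ((a - d) * (a - d)) ((a + d) * (a + d) - 4)) as [Hlt | Hge].
  - assert (Hbc : 0 < b * c) by lia.
    assert (Ha : 0 < a /\ 0 < d) by nia.
    destruct (Z_lt_le_dec 0 c); [left | right; left]; nia.
  - right; right.
    destruct (Z.abs_spec b) as [[? ->] | [? ->]], (Z.abs_spec c) as [[? ->] | [? ->]]; nia.
Qed.

Lemma reduction (f : mat2) : mat2_det f = 1 -> 3 <= mat2_tr f -> conj_nonneg f.
Proof.
  remember (Z.abs_nat (mc f)) as n eqn:Hn.
  revert f Hn; induction n as [n IH] using lt_wf_ind; intros f Hn Hd Ht.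
  pose proof (hyperbolic_mc_nonzero f Hd Ht) as Hc.
  destruct (centering f Hc) as (k & f' & -> & Hc' & Hd' & Ht' & He).
  apply conj_nonneg_T.
  rewrite <- Hd' in Hd; rewrite <- Ht' in Ht; rewrite <- Hc' in Hc, Hn.
  destruct (centered_trichotomy f' Hd Ht Hc He) as [H | [H | H]].
  - apply conj_nonneg_base; assumption.
  - apply conj_nonneg_S, conj_nonneg_base; [assumption | rewrite sconj_det; assumption].
  - apply conj_nonneg_S, (IH (Z.abs_nat (mc (sconj f'))));
      [| reflexivity | rewrite sconj_det; assumption | rewrite sconj_tr; assumption].
    subst n; destruct f'; unfold sconj in *; simpl in *; lia.
Qed.

(** ** Nonnegative unimodular matrices are positive words in R and L *)

Definition Rm : mat2 := Mat2 1 1 0 1.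
Definition Lm : mat2 := Mat2 1 0 1 1.
Definition letter (b : bool) : mat2 := if b then Rm else Lm.
Definition word_mat (w : list bool) : mat2 :=
  fold_right (fun b M => mat2_mul (letter b) M) mat2_id w.

Lemma word_mat_app (u v : list bool) :
  word_mat (u ++ v) = mat2_mul (word_mat u) (word_mat v).
Proof.
  induction u as [| b u IH]; simpl;
    [rewrite mat2_mul_id_l | rewrite IH, mat2_mul_assoc]; reflexivity.
Qed.

Lemma word_mat_snoc (u : list bool) (b : bool) :
  word_mat (u ++ [b]) = mat2_mul (word_mat u) (letter b).
Proof. rewrite word_mat_app; simpl; rewrite mat2_mul_id_r; reflexivity. Qed.

Lemma nonneg_mul (M N : mat2) :
  mat2_nonneg M -> mat2_nonneg N -> mat2_nonneg (mat2_mul M N).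
Proof.
  destruct M as [a b c d], N as [a1 b1 c1 d1].
  unfold mat2_nonneg, mat2_mul; cbn [ma mb mc md]; intros; repeat split; nia.
Qed.

Lemma word_mat_nonneg (w : list bool) : mat2_nonneg (word_mat w).
Proof.
  induction w as [| [] w IH]; simpl; [| apply nonneg_mul ..]; auto;
    unfold mat2_nonneg; simpl; lia.
Qed.

Lemma word_mat_det (w : list bool) : mat2_det (word_mat w) = 1.
Proof. induction w as [| [] w IH]; simpl; [| rewrite mat2_det_mul, IH ..]; reflexivity. Qed.

Lemma nonneg_row_dominates (a b c d : Z) :
  0 <= a -> 0 <= b -> 0 <= c -> 0 <= d -> a * d - b * c = 1 ->
  (a = 1 /\ b = 0 /\ c = 0 /\ d = 1) \/ (c <= a /\ d <= b) \/ (a <= c /\ b <= d).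
Proof.
  intros Ha Hb Hc Hd H.
  destruct (Z_le_gt_dec c a), (Z_le_gt_dec d b); try tauto; try (right; right; lia).
  - destruct (Z_le_gt_dec a c); [right; right; lia | left].
    assert (b = 0 /\ c = 0) as [-> ->] by nia.
    assert (Had : a * d = 1) by lia.
    destruct (Z.eq_mul_1 _ _ Had) as [-> | ->]; lia.
  - nia.
Qed.

(* Subtracting the dominated row from the dominating one peels off a letter;
   the entry sum decreases, so the process ends at the identity. *)
Lemma nonneg_is_word (A : mat2) :
  mat2_nonneg A -> mat2_det A = 1 -> exists w, word_mat w = A.
Proof.
  remember (Z.to_nat (ma A + mb A + mc A + md A)) as n eqn:Hn.
  revert A Hn; induction n as [n IH] using lt_wf_ind.
  intros [a b c d] Hn (Ha & Hb & Hc & Hd) Hdet.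
  unfold mat2_det in Hdet; cbn [ma mb mc md] in *.
  assert (1 <= a) by (destruct (Z.eq_dec a 0) as [-> |]; nia).
  assert (1 <= d) by (destruct (Z.eq_dec d 0) as [-> |]; nia).
  destruct (nonneg_row_dominates a b c d Ha Hb Hc Hd Hdet)
    as [(-> & -> & -> & ->) | [[H1 H2] | [H1 H2]]].
  - exists []; reflexivity.
  - destruct (IH (Z.to_nat (a - c + (b - d) + c + d))) with (A := Mat2 (a - c) (b - d) c d)
      as [w Hw]; [lia | reflexivity | unfold mat2_nonneg, mat2_det; cbn [ma mb mc md]; lia .. |].
    exists (true :: w); simpl; rewrite Hw; unfold Rm; mat_eq.
  - destruct (IH (Z.to_nat (a + b + (c - a) + (d - b)))) with (A := Mat2 a b (c - a) (d - b))
      as [w Hw]; [lia | reflexivity | unfold mat2_nonneg, mat2_det; cbn [ma mb mc md]; lia .. |].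
    exists (false :: w); simpl; rewrite Hw; unfold Lm; mat_eq.
Qed.

Definition col1 (P : mat2) : Z * Z := (ma P, mc P).
Definition col2 (P : mat2) : Z * Z := (mb P, md P).
Definition mediant (P : mat2) : Z * Z := (ma P + mb P, mc P + md P).

Lemma nonneg_coprime_vertex (p q : Z) :
  0 <= p -> 0 <= q -> Z.gcd p q = 1 -> is_vertex (p, q).
Proof.
  intros Hp Hq Hg; split; [exact Hg |]; simpl.
  destruct (Z.eq_dec q 0) as [-> | ]; [right | left; lia].
  rewrite Z.gcd_0_r, Z.abs_eq in Hg by exact Hp; rewrite Hg; reflexivity.
Qed.

Lemma col1_vertex (P : mat2) : mat2_nonneg P -> mat2_det P = 1 -> is_vertex (col1 P).
Proof.
  destruct P as [a b c d]; intros (? & ? & ? & ?) Hd.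
  unfold mat2_det, col1, col2 in *; simpl in *.
  apply nonneg_coprime_vertex; try assumption.
  apply Z.bezout_1_gcd; exists d, (- b); rewrite <- Hd; ring.
Qed.

Lemma col2_vertex (P : mat2) : mat2_nonneg P -> mat2_det P = 1 -> is_vertex (col2 P).
Proof.
  destruct P as [a b c d]; intros (? & ? & ? & ?) Hd.
  unfold mat2_det, col1, col2 in *; simpl in *.
  apply nonneg_coprime_vertex; try assumption.
  apply Z.bezout_1_gcd; exists (- c), a; rewrite <- Hd; ring.
Qed.

Lemma columns_adjacent (P : mat2) :
  mat2_nonneg P -> mat2_det P = 1 -> farey_adj (col1 P) (col2 P).
Proof.
  intros HP Hd; split; [apply col1_vertex; auto |]; split; [apply col2_vertex; auto |].
  destruct P as [a b c d]; unfold mat2_det in Hd; simpl in *.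
  replace (a * d - c * b) with 1 by lia; reflexivity.
Qed.

Lemma col1_R (P : mat2) : col1 (mat2_mul P Rm) = col1 P.
Proof. destruct P; unfold col1, Rm, mat2_mul; simpl; f_equal; ring. Qed.
Lemma col2_R (P : mat2) : col2 (mat2_mul P Rm) = mediant P.
Proof. destruct P; unfold col2, mediant, Rm, mat2_mul; simpl; f_equal; ring. Qed.
Lemma col1_L (P : mat2) : col1 (mat2_mul P Lm) = mediant P.
Proof. destruct P; unfold col1, mediant, Lm, mat2_mul; simpl; f_equal; ring. Qed.
Lemma col2_L (P : mat2) : col2 (mat2_mul P Lm) = col2 P.
Proof. destruct P; unfold col2, Lm, mat2_mul; simpl; f_equal; ring. Qed.

Lemma mediant_adjacent (P : mat2) :
  mat2_nonneg P -> mat2_det P = 1 ->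
  farey_adj (col1 P) (mediant P) /\ farey_adj (col2 P) (mediant P).
Proof.
  intros HP Hd; split.
  - rewrite <- col1_R, <- col2_R; apply columns_adjacent.
    + apply nonneg_mul; [exact HP | unfold mat2_nonneg; simpl; lia].
    + rewrite mat2_det_mul, Hd; reflexivity.
  - rewrite <- col2_L, <- col1_L; apply farey_adj_sym, columns_adjacent.
    + apply nonneg_mul; [exact HP | unfold mat2_nonneg; simpl; lia].
    + rewrite mat2_det_mul, Hd; reflexivity.
Qed.

(** ** Separation: the two columns cut the Farey graph *)

(* Coordinates of [v] in the basis of columns of a unimodular [P]. *)
Definition coord1 (P : mat2) (v : Z * Z) : Z := md P * fst v - mb P * snd v.
Definition coord2 (P : mat2) (v : Z * Z) : Z := - mc P * fst v + ma P * snd v.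

Lemma coords_spec (P : mat2) (v : Z * Z) : mat2_det P = 1 ->
  v = (coord1 P v * ma P + coord2 P v * mb P, coord1 P v * mc P + coord2 P v * md P).
Proof.
  destruct P as [a b c d], v as [p q]; unfold mat2_det, coord1, coord2; simpl; intros Hd.
  f_equal; [rewrite <- (Z.mul_1_r p) at 1 | rewrite <- (Z.mul_1_r q) at 1]; rewrite <- Hd; ring.
Qed.

(* [side P v > 0] iff [v] lies strictly inside the Farey interval spanned by
   the columns of [P], and [side P v < 0] iff strictly outside. *)
Definition side (P : mat2) (v : Z * Z) : Z := coord1 P v * coord2 P v.

Lemma side_no_crossing (P : mat2) (u v : Z * Z) :
  mat2_det P = 1 -> farey_adj u v -> side P u < 0 -> 0 < side P v -> False.
Proof.
  intros Hd (_ & _ & H); unfold side; intros Hu Hv.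
  assert (Hc : pair_det u v = coord1 P u * coord2 P v - coord2 P u * coord1 P v).
  { destruct P as [a b c d], u as [p q], v as [r s]; unfold mat2_det in Hd.
    unfold pair_det, coord1, coord2; simpl in *.
    rewrite <- (Z.mul_1_r (p * s - q * r)), <- Hd; ring. }
  change (Z.abs (pair_det u v) = 1) in H; rewrite Hc in H.
  set (x1 := coord1 P u) in *; set (y1 := coord2 P u) in *;
    set (x2 := coord1 P v) in *; set (y2 := coord2 P v) in *.
  assert (Hopp : (x1 * y2) * (y1 * x2) < 0)
    by (replace ((x1 * y2) * (y1 * x2)) with ((x1 * y1) * (x2 * y2)) by ring; nia).
  nia.
Qed.

Lemma vertex_nonneg_multiple (lam x y : Z) :
  0 <= x -> 0 <= y -> is_vertex (lam * x, lam * y) -> lam = 1.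
Proof.
  intros Hx Hy [Hg Hq]; simpl in *.
  rewrite Z.gcd_mul_mono_l in Hg.
  assert (Hl : Z.abs lam = 1) by (apply (Z.eq_mul_1_nonneg _ (Z.gcd x y)); lia).
  destruct (Z.abs_spec lam) as [[_ E] | [_ E]]; [lia |].
  assert (Hm : lam = -1) by lia.
  destruct Hq as [Hq | Hq]; [nia | injection Hq as Hq _; rewrite Hm in Hq; lia].
Qed.

Lemma side_zero (P : mat2) (v : Z * Z) :
  mat2_nonneg P -> mat2_det P = 1 -> is_vertex v -> side P v = 0 ->
  v = col1 P \/ v = col2 P.
Proof.
  intros (Ha & Hb & Hc & Hd) Hdet Hv H.
  pose proof (coords_spec P v Hdet) as Hco; unfold side in H.
  set (x := coord1 P v) in *; set (y := coord2 P v) in *; clearbody x y; subst v.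
  apply Z.mul_eq_0 in H as [-> | ->]; [right | left]; unfold col1, col2.
  - rewrite !Z.mul_0_l, !Z.add_0_l in *.
    rewrite (vertex_nonneg_multiple y (mb P) (md P)); auto; f_equal; ring.
  - rewrite !Z.mul_0_l, !Z.add_0_r in *.
    rewrite (vertex_nonneg_multiple x (ma P) (mc P)); auto; f_equal; ring.
Qed.

Lemma separation (P : mat2) (m : nat) (u z : Z * Z) :
  mat2_nonneg P -> mat2_det P = 1 -> farey_path m u z ->
  side P u <= 0 -> 0 < side P z ->
  exists i, (i < m)%nat /\ (farey_path i u (col1 P) \/ farey_path i u (col2 P)).
Proof.
  intros HP Hd Hp; induction Hp as [v Hv | n u v w Ha Hp IH]; intros H1 H2; [lia |].
  destruct (Z.eq_dec (side P u) 0) as [E | E].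
  - exists 0%nat; split; [lia |].
    destruct (side_zero P u HP Hd (proj1 Ha) E) as [-> | ->];
      [left | right]; constructor; apply Ha.
  - assert (Hv : side P v <= 0).
    { destruct (Z_le_gt_dec (side P v) 0); [assumption |].
      exfalso; apply (side_no_crossing P u v Hd Ha); lia. }
    destruct (IH Hv H2) as (i & Hi & Hpi); exists (S i); split; [lia |].
    destruct Hpi; [left | right]; econstructor; eauto.
Qed.

(** ** Farey distances from [infty] to the columns of a positive word *)

(* The pair (distance to column 1, distance to column 2) evolves under
   appending a letter: the replaced column becomes the mediant, at distance
   one more than the nearer old column. *)
Definition step (b : bool) (s : nat * nat) : nat * nat :=
  let (x, y) := s in if b then (x, S (Nat.min x y)) else (S (Nat.min x y), y).

Definition run (w : list bool) (s : nat * nat) : nat * nat :=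
  fold_left (fun s b => step b s) w s.

Lemma run_cons (b : bool) (w : list bool) (s : nat * nat) :
  run (b :: w) s = run w (step b s).
Proof. reflexivity. Qed.

Lemma run_app (u v : list bool) (s : nat * nat) : run (u ++ v) s = run v (run u s).
Proof. unfold run; rewrite fold_left_app; reflexivity. Qed.

Lemma run_snoc (u : list bool) (b : bool) (s : nat * nat) :
  run (u ++ [b]) s = step b (run u s).
Proof. rewrite run_app; reflexivity. Qed.

(* Any path from [infty] to the mediant must cross one of the columns, since
   [infty] lies outside their Farey interval and the mediant strictly inside. *)
Lemma mediant_dist (P : mat2) (x y : nat) :
  mat2_nonneg P -> mat2_det P = 1 ->
  farey_dist infty (col1 P) x -> farey_dist infty (col2 P) y ->
  farey_dist infty (mediant P) (S (Nat.min x y)).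
Proof.
  intros HP Hd [Hx1 Hx2] [Hy1 Hy2].
  destruct (mediant_adjacent P HP Hd) as [Ha1 Ha2]; split.
  - rewrite <- Nat.add_1_r; destruct (Nat.le_ge_cases x y).
    + rewrite Nat.min_l by assumption; eapply path_app; [exact Hx1 | apply path_one, Ha1].
    + rewrite Nat.min_r by assumption; eapply path_app; [exact Hy1 | apply path_one, Ha2].
  - intros m Hm.
    assert (Hout : side P infty <= 0).
    { destruct P as [a b c d], HP as (? & ? & ? & ?); unfold side, coord1, coord2, infty.
      simpl in *; nia. }
    assert (Hin : 0 < side P (mediant P)).
    { destruct P as [a b c d]; unfold mat2_det in Hd; unfold side, coord1, coord2, mediant.
      simpl in *; replace (d * (a + b) - b * (c + d)) with 1 by lia.
      replace (- c * (a + b) + a * (c + d)) with 1 by lia; lia. }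
    destruct (separation P m infty (mediant P) HP Hd Hm Hout Hin) as (i & Hi & [Hp | Hp]).
    + pose proof (Hx2 i Hp); lia.
    + pose proof (Hy2 i Hp); lia.
Qed.

Lemma word_column_dist (w : list bool) :
  farey_dist infty (col1 (word_mat w)) (fst (run w (0, 1)%nat)) /\
  farey_dist infty (col2 (word_mat w)) (snd (run w (0, 1)%nat)).
Proof.
  induction w as [| b w IH] using rev_ind.
  - split; split.
    + constructor; apply infty_vertex.
    + intros; simpl; lia.
    + apply path_one; split; [apply infty_vertex |]; split; [| reflexivity].
      split; [reflexivity | left; simpl; lia].
    + intros [| m] Hm; [inversion Hm | simpl; lia].
  - destruct IH as [H1 H2]; rewrite word_mat_snoc, run_snoc.
    pose proof (word_mat_nonneg w) as HP; pose proof (word_mat_det w) as Hd.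
    destruct (run w (0, 1)%nat) as [x y]; cbn [fst snd] in *.
    destruct b; simpl; [rewrite col1_R, col2_R | rewrite col1_L, col2_L];
      split; auto; apply mediant_dist; auto.
Qed.

Fixpoint word_pow (w : list bool) (j : nat) : list bool :=
  match j with O => [] | S j' => w ++ word_pow w j' end.

Lemma orbit_col1 (w : list bool) (j : nat) :
  Nat.iter j (mat2_act (word_mat w)) infty = col1 (word_mat (word_pow w j)).
Proof.
  induction j as [| j IH]; [reflexivity |].
  simpl; rewrite IH, mat2_act_vec, word_mat_app.
  replace (mat2_vec (word_mat w) (col1 (word_mat (word_pow w j))))
    with (col1 (mat2_mul (word_mat w) (word_mat (word_pow w j))))
    by (destruct (word_mat w), (word_mat (word_pow w j));
        unfold mat2_vec, col1, mat2_mul; simpl; f_equal).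
  rewrite <- word_mat_app; apply normalize_vertex, col1_vertex;
    [apply word_mat_nonneg | apply word_mat_det].
Qed.

(** ** Eventual periodicity of the distance recursion *)

Open Scope nat_scope.

(* The two distances of adjacent vertices differ by at most one. *)
Definition balanced (s : nat * nat) : Prop := fst s <= snd s + 1 /\ snd s <= fst s + 1.
Definition gap (s : nat * nat) : Z := (Z.of_nat (fst s) - Z.of_nat (snd s))%Z.
Definition state_shift (s : nat * nat) (c : nat) : nat * nat := (fst s + c, snd s + c).

Lemma run_balanced (w : list bool) (s : nat * nat) : balanced s -> balanced (run w s).
Proof.
  revert s; induction w as [| b w IH]; intros [x y] H; [exact H |].
  rewrite run_cons; apply IH; destruct b; unfold balanced in *; cbn [fst snd step] in *; lia.
Qed.

Lemma run_shift (w : list bool) (s : nat * nat) (c : nat) :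
  run w (state_shift s c) = state_shift (run w s) c.
Proof.
  revert s; induction w as [| b w IH]; intros [x y]; [reflexivity |].
  rewrite !run_cons, <- IH; f_equal.
  destruct b; unfold state_shift; cbn [fst snd step]; f_equal; lia.
Qed.

Lemma run_gap_mono (w : list bool) (s s' : nat * nat) :
  balanced s -> balanced s' -> (gap s <= gap s')%Z -> (gap (run w s) <= gap (run w s'))%Z.
Proof.
  revert s s'; induction w as [| b w IH]; intros [x y] [x' y'] H1 H2 H3; [exact H3 |].
  rewrite !run_cons; apply IH;
    destruct b; unfold balanced, gap in *; cbn [fst snd step] in *; lia.
Qed.

Lemma run_increasing (w : list bool) (s : nat * nat) :
  balanced s -> fst s <= fst (run w s) /\ snd s <= snd (run w s).
Proof.
  revert s; induction w as [| b w IH]; intros [x y] H; [simpl; lia |].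
  rewrite run_cons.
  assert (Hb : balanced (step b (x, y)))
    by (destruct b; unfold balanced in *; cbn [fst snd step] in *; lia).
  specialize (IH _ Hb); unfold balanced in H; destruct b; cbn [fst snd step] in *; lia.
Qed.

Definition orbit_state (w : list bool) (j : nat) : nat * nat := run (word_pow w j) (0, 1).

Lemma orbit_state_S (w : list bool) (j : nat) :
  orbit_state w (S j) = run w (orbit_state w j).
Proof.
  unfold orbit_state; rewrite <- run_app; f_equal.
  induction j as [| j IH]; simpl in *; [rewrite app_nil_r; reflexivity |].
  rewrite IH at 1; apply app_assoc.
Qed.

Lemma orbit_state_balanced (w : list bool) (j : nat) : balanced (orbit_state w j).
Proof. apply run_balanced; unfold balanced; simpl; lia. Qed.

(* The gap takes values in {-1,0,1}, is nondecreasing along the orbit, and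
   is constant from the first repetition on; hence it is stable from j = 2. *)
Lemma orbit_state_gap_stable (w : list bool) :
  gap (orbit_state w 2) = gap (orbit_state w 3).
Proof.
  pose proof (orbit_state_balanced w) as Hb.
  assert (Hm : forall j, (gap (orbit_state w j) <= gap (orbit_state w (S j)))%Z).
  { induction j as [| j IH].
    - specialize (Hb 1); unfold balanced, gap in *; simpl in *; lia.
    - rewrite (orbit_state_S w (S j)), (orbit_state_S w j) at 1; apply run_gap_mono; auto. }
  assert (He : forall j, gap (orbit_state w j) = gap (orbit_state w (S j)) ->
                         gap (orbit_state w (S j)) = gap (orbit_state w (S (S j)))).
  { intros j H; rewrite (orbit_state_S w (S j)), !(orbit_state_S w j) in *.
    apply Z.le_antisymm; apply run_gap_mono; auto using run_balanced; lia. }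
  pose proof (Hm 0); pose proof (Hm 1); pose proof (Hm 2); pose proof (Hb 3).
  assert (gap (orbit_state w 0) = (-1)%Z) by reflexivity.
  destruct (Z.eq_dec (gap (orbit_state w 0)) (gap (orbit_state w 1))) as [E | E];
    [apply He, He, E |].
  destruct (Z.eq_dec (gap (orbit_state w 1)) (gap (orbit_state w 2))) as [E' | E'];
    [apply He, E' |].
  unfold balanced, gap in *; lia.
Qed.

Lemma orbit_state_periodic (w : list bool) :
  exists n, run w (orbit_state w 2) = state_shift (orbit_state w 2) n /\
    forall j, orbit_state w (j + 2) = state_shift (orbit_state w 2) (n * j).
Proof.
  pose proof (orbit_state_gap_stable w) as Hg.
  pose proof (run_increasing w _ (orbit_state_balanced w 2)) as Hi.
  rewrite <- orbit_state_S in Hi.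
  set (n := fst (orbit_state w 3) - fst (orbit_state w 2)); exists n.
  assert (H3 : orbit_state w 3 = state_shift (orbit_state w 2) n).
  { unfold n; revert Hg Hi; destruct (orbit_state w 2) as [x y], (orbit_state w 3) as [x' y'].
    unfold gap, state_shift; simpl; intros; f_equal; lia. }
  split; [rewrite <- orbit_state_S; exact H3 |].
  induction j as [| j IH].
  - change (0 + 2) with 2; rewrite Nat.mul_0_r.
    destruct (orbit_state w 2); unfold state_shift; simpl; f_equal; lia.
  - change (S j + 2) with (S (j + 2)).
    rewrite orbit_state_S, IH, run_shift, <- orbit_state_S, H3.
    destruct (orbit_state w 2); unfold state_shift; simpl; f_equal; lia.
Qed.

Open Scope Z_scope.

(** ** Pell lower bounds for the entries of a positive word *)

(* Shifted Pell numbers: [M(2)^n = (pell (n+2), pell (n+1); pell (n+1), pell n)]. *)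
Fixpoint pell (k : nat) : Z :=
  match k with O => 1 | S O => 0 | S (S k' as k1) => 2 * pell k1 + pell k' end.

Lemma pell_SS (k : nat) : pell (S (S k)) = 2 * pell (S k) + pell k.
Proof. reflexivity. Qed.

Lemma pell_nonneg (k : nat) : 0 <= pell k.
Proof.
  enough (H : 0 <= pell k /\ 0 <= pell (S k)) by apply H.
  induction k as [| k [IH1 IH2]]; [simpl; lia | rewrite pell_SS; lia].
Qed.

Lemma M2_pow (n : nat) :
  mat2_pow M2 n = Mat2 (pell (S (S n))) (pell (S n)) (pell (S n)) (pell n).
Proof.
  induction n as [| n IH]; [reflexivity |].
  simpl mat2_pow; rewrite IH; unfold M2, mat2_mul; apply mat2_ext; cbn [ma mb mc md];
    rewrite ?pell_SS; ring.
Qed.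

Lemma M2_trace (n : nat) : mat2_tr (mat2_pow M2 n) = pell (S (S n)) + pell n.
Proof. rewrite M2_pow; reflexivity. Qed.

(* Lower bounds on the entries of [word_mat z] in terms of the state
   [run z (1,0)]; there is one shape for each of the three possible gaps. *)
Definition pell_bound (s : nat * nat) (P : mat2) : Prop :=
  let (x, y) := s in
  (x = S y /\ pell (S (S y)) <= ma P /\ pell (S y) <= mb P /\
     pell (S y) <= mc P /\ pell y <= md P) \/
  (x = y /\ pell (S x) <= ma P /\ pell (S x) <= mb P /\ pell (S (S x)) <= ma P + mb P /\
     pell x <= mc P /\ pell x <= md P /\ pell (S x) <= mc P + md P) \/
  (y = S x /\ pell (S x) <= ma P /\ pell (S (S x)) <= mb P /\
     pell x <= mc P /\ pell (S x) <= md P).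

Lemma pell_bound_step (s : nat * nat) (P : mat2) (b : bool) :
  mat2_nonneg P -> pell_bound s P -> pell_bound (step b s) (mat2_mul P (letter b)).
Proof.
  destruct s as [x y], P as [a b' c d]; intros (Ha & Hb & Hc & Hd) H.
  unfold pell_bound in *; cbn [ma mb mc md] in *.
  destruct b; unfold step, letter, Rm, Lm, mat2_mul; cbn [ma mb mc md];
    destruct H as [(-> & H) | [(-> & H) | (-> & H)]];
    try (rewrite Nat.min_r by lia); try (rewrite Nat.min_l by lia);
    [right; left | right; right | right; right | left | left | right; left];
    split; try reflexivity;
    try pose proof (pell_nonneg x); try pose proof (pell_nonneg y);
    try pose proof (pell_nonneg (S x)); try pose proof (pell_nonneg (S y));
    rewrite ?pell_SS in *; lia.
Qed.

Lemma word_pell_bound (z : list bool) : pell_bound (run z (1, 0)%nat) (word_mat z).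
Proof.
  induction z as [| b z IH] using rev_ind.
  - left; simpl; lia.
  - rewrite run_snoc, word_mat_snoc; apply pell_bound_step; [apply word_mat_nonneg | exact IH].
Qed.

Lemma trace_from_R (z : list bool) (n : nat) :
  run z (1, 0)%nat = (S n, n) -> pell (S (S n)) + pell n <= mat2_tr (word_mat z).
Proof.
  intros H; pose proof (word_pell_bound z) as Hb; rewrite H in Hb.
  unfold mat2_tr; destruct Hb as [(_ & Hb) | [(E & _) | (E & _)]]; lia.
Qed.

(* Exchanging the letters R and L conjugates by the flip of coordinates and
   swaps the two distances; this transfers the bound to the start (0,1). *)
Definition mat2_flip (M : mat2) : mat2 := Mat2 (md M) (mc M) (mb M) (ma M).
Definition state_swap (s : nat * nat) : nat * nat := (snd s, fst s).

Lemma run_mirror (z : list bool) (s : nat * nat) :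
  run (map negb z) (state_swap s) = state_swap (run z s).
Proof.
  revert s; induction z as [| b z IH]; intros [x y]; [reflexivity |].
  cbn [map]; rewrite !run_cons, <- IH; f_equal.
  destruct b; unfold state_swap; cbn [fst snd step negb]; f_equal; lia.
Qed.

Lemma word_mat_mirror (z : list bool) : word_mat (map negb z) = mat2_flip (word_mat z).
Proof.
  induction z as [| b z IH]; [reflexivity |]; cbn [map word_mat fold_right].
  fold (word_mat (map negb z)) (word_mat z); rewrite IH.
  destruct (word_mat z) as [a1 b1 c1 d1], b;
    unfold mat2_flip, letter, Rm, Lm; cbn [negb]; mat_eq.
Qed.

Lemma trace_from_L (z : list bool) (n : nat) :
  run z (0, 1)%nat = (n, S n) -> pell (S (S n)) + pell n <= mat2_tr (word_mat z).
Proof.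
  intros H.
  assert (H' : run (map negb z) (1, 0)%nat = (S n, n))
    by (change (1, 0)%nat with (state_swap (0, 1)%nat); rewrite run_mirror, H; reflexivity).
  pose proof (trace_from_R _ _ H') as Ht; rewrite word_mat_mirror in Ht.
  unfold mat2_flip, mat2_tr in *; cbn [ma md] in *; lia.
Qed.

(* Shifting is injective, so a shifted periodicity can be moved to (1,0)
   or (0,1). *)
Lemma state_shift_inj (s t : nat * nat) (c : nat) :
  state_shift s c = state_shift t c -> s = t.
Proof.
  destruct s, t; unfold state_shift; simpl; intros E; injection E as; f_equal; lia.
Qed.

Lemma trace_of_shifting_word (z : list bool) (s : nat * nat) (n : nat) :
  balanced s -> gap s <> 0 -> run z s = state_shift s n ->
  pell (S (S n)) + pell n <= mat2_tr (word_mat z).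
Proof.
  destruct s as [x y]; unfold balanced, gap; cbn [fst snd]; intros Hb Hg H.
  destruct (Nat.lt_ge_cases y x).
  - replace x with (S y) in * by lia; apply trace_from_R, (state_shift_inj _ _ y).
    rewrite <- run_shift; unfold state_shift in *; simpl in *.
    rewrite H; f_equal; lia.
  - replace y with (S x) in * by lia; apply trace_from_L, (state_shift_inj _ _ x).
    rewrite <- run_shift; unfold state_shift in *; simpl in *.
    rewrite H; f_equal; lia.
Qed.

(* The trace bound for a periodic word. When the periodic state has gap 0 we
   rotate the word by one letter, which preserves the trace and produces a
   periodic state with nonzero gap. *)
Lemma trace_of_periodic_word (w : list bool) (s : nat * nat) (n : nat) :
  w <> [] -> balanced s -> run w s = state_shift s n ->
  pell (S (S n)) + pell n <= mat2_tr (word_mat w).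
Proof.
  intros Hw Hs H.
  destruct (Z.eq_dec (gap s) 0) as [E | E]; [| exact (trace_of_shifting_word w s n Hs E H)].
  destruct w as [| b w']; [congruence |].
  replace (mat2_tr (word_mat (b :: w'))) with (mat2_tr (word_mat (w' ++ [b])))
    by (rewrite word_mat_snoc, mat2_tr_comm; reflexivity).
  apply (trace_of_shifting_word _ (step b s)).
  - destruct b, s; unfold balanced in *; cbn [fst snd step] in *; lia.
  - destruct b, s; unfold balanced, gap in *; cbn [fst snd step] in *; lia.
  - rewrite run_snoc, <- run_cons, H.
    change (run [b] (state_shift s n) = state_shift (run [b] s) n); apply run_shift.
Qed.

Open Scope R_scope.

Lemma M2_trace_formula (n : nat) :
  IZR (mat2_tr (mat2_pow M2 n)) = (1 + sqrt 2) ^ n + (1 - sqrt 2) ^ n.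
Proof.
  rewrite M2_trace.
  assert (Hs : sqrt 2 * sqrt 2 = 2) by (apply sqrt_sqrt; lra).
  assert (Hp : (1 + sqrt 2) ^ 2 = 2 * (1 + sqrt 2) + 1) by nra.
  assert (Hm : (1 - sqrt 2) ^ 2 = 2 * (1 - sqrt 2) + 1) by nra.
  enough (H : forall k, IZR (pell (S (S k)) + pell k) = (1 + sqrt 2) ^ k + (1 - sqrt 2) ^ k /\
      IZR (pell (S (S (S k))) + pell (S k)) = (1 + sqrt 2) ^ S k + (1 - sqrt 2) ^ S k)
    by apply H.
  intros k; induction k as [| k [IH1 IH2]]; [simpl; split; lra | split; [exact IH2 |]].
  replace (pell (S (S (S (S k)))) + pell (S (S k)))%Z
    with (2 * (pell (S (S (S k))) + pell (S k)) + (pell (S (S k)) + pell k))%Z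
    by (rewrite !(pell_SS (S (S k))), !(pell_SS (S k)), !(pell_SS k); ring).
  rewrite plus_IZR, mult_IZR, IH1, IH2.
  replace (S (S k)) with (2 + k)%nat by reflexivity; rewrite !pow_add, Hp, Hm; simpl; ring.
Qed.

Lemma le_of_eps (x y : R) : (forall eps, eps > 0 -> x < y + 2 * eps) -> x <= y.
Proof.
  intros H; destruct (Rle_dec x y) as [Hle | Hgt]; [exact Hle |].
  specialize (H ((x - y) / 4) ltac:(lra)); lra.
Qed.

Lemma large_index (eps K : R) (N : nat) :
  eps > 0 -> exists j, (j >= N)%nat /\ (2 <= j)%nat /\ K < eps * INR j.
Proof.
  intros He; destruct (INR_archimed eps K He) as [m Hm].
  exists (N + m + 2)%nat; split; [lia | split; [lia |]].
  assert (INR m <= INR (N + m + 2)) by (apply le_INR; lia); nra.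
Qed.

Lemma liminf_of_linear (d : nat -> nat) (l c K : R) :
  is_liminf (fun j => INR (d j) / INR j) l ->
  (forall j, (2 <= j)%nat -> INR (d j) <= c * INR j + K /\ c * INR j <= INR (d j) + K) ->
  l = c.
Proof.
  intros [Hlow Hup] Hb.
  assert (Hj : forall j, (2 <= j)%nat -> 0 < INR j /\ INR (d j) / INR j * INR j = INR (d j)).
  { intros j Hj; assert (0 < INR j) by (apply lt_0_INR; lia); split; [assumption | field; lra]. }
  apply Rle_antisym; apply le_of_eps; intros eps He.
  - destruct (Hlow eps He) as [N HN].
    destruct (large_index eps K N He) as (j & Hj1 & Hj2 & Hj3).
    specialize (HN j Hj1); destruct (Hb j Hj2) as [Hb1 _], (Hj j Hj2) as [Hpos Heq].
    set (u := INR (d j) / INR j) in *.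
    assert ((l - eps) * INR j < u * INR j) by (apply Rmult_lt_compat_r; assumption).
    destruct (Rlt_dec (l - 2 * eps - c) 0); [lra | nra].
  - destruct (large_index eps K O He) as (m & _ & Hm2 & Hm3).
    destruct (Hup eps He m) as (j & Hj1 & Hj2).
    assert (Hj2' : (2 <= j)%nat) by lia.
    destruct (Hb j Hj2') as [_ Hb2], (Hj j Hj2') as [Hpos Heq].
    assert (INR m <= INR j) by (apply le_INR; lia).
    set (u := INR (d j) / INR j) in *.
    assert (u * INR j < (l + eps) * INR j) by (apply Rmult_lt_compat_r; assumption).
    destruct (Rlt_dec (c - l - 2 * eps) 0); [lra | nra].
Qed.

Open Scope Z_scope.

(** ** Comparing the orbit of [f] with the orbit of its nonnegative conjugate *)

Lemma word_orbit_dist (w : list bool) (j : nat) :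
  farey_dist infty (Nat.iter j (mat2_act (word_mat w)) infty) (fst (orbit_state w j)).
Proof. rewrite orbit_col1; apply (word_column_dist (word_pow w j)). Qed.

Lemma iter_vertex (A : mat2) (j : nat) (v : Z * Z) :
  mat2_det A = 1 -> is_vertex v -> is_vertex (Nat.iter j (mat2_act A) v).
Proof. intros Hd Hv; induction j; simpl; [exact Hv | apply act_vertex; auto]. Qed.

Lemma path_iter (A : mat2) (j m : nat) (u v : Z * Z) :
  mat2_det A = 1 -> farey_path m u v ->
  farey_path m (Nat.iter j (mat2_act A) u) (Nat.iter j (mat2_act A) v).
Proof. intros Hd H; induction j; simpl; [exact H | apply path_act; auto]. Qed.

Section Conjugate.

Variables (f g gi A : mat2).
Hypothesis act_f : forall v, mat2_act f v = mat2_act g (mat2_act A (mat2_act gi v)).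
Hypotheses (g_gi : mat2_mul g gi = mat2_id) (gi_g : mat2_mul gi g = mat2_id).
Hypotheses (det_g : mat2_det g = 1) (det_gi : mat2_det gi = 1) (det_A : mat2_det A = 1).

Lemma iter_conj (j : nat) (v : Z * Z) : is_vertex v ->
  Nat.iter j (mat2_act f) v = mat2_act g (Nat.iter j (mat2_act A) (mat2_act gi v)).
Proof.
  intros Hv; induction j as [| j IH]; simpl; [symmetry; apply act_inv; assumption |].
  rewrite IH, act_f, (act_inv g gi); [reflexivity | exact gi_g |].
  apply iter_vertex, act_vertex; assumption.
Qed.

Lemma conjugate_orbit_dist (e j d D : nat) :
  farey_path e infty (mat2_act g infty) ->
  farey_dist infty (Nat.iter j (mat2_act f) infty) d ->
  farey_dist infty (Nat.iter j (mat2_act A) infty) D ->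
  (d <= D + 2 * e /\ D <= d + 2 * e)%nat.
Proof.
  intros He Hd HD.
  set (u := mat2_act gi infty).
  set (X := Nat.iter j (mat2_act A) infty); set (Y := Nat.iter j (mat2_act A) u).
  assert (Hu : farey_path e infty u).
  { apply path_rev; unfold u; rewrite <- (act_inv g gi infty gi_g infty_vertex) at 2.
    apply path_act; assumption. }
  assert (HXY : farey_path e X Y) by (apply path_iter; assumption).
  assert (Hf : Nat.iter j (mat2_act f) infty = mat2_act g Y)
    by (apply iter_conj, infty_vertex).
  rewrite Hf in Hd; replace (2 * e)%nat with (e + e)%nat by lia; split.
  - (* push the path u -> infty -> X -> Y forward by g *)
    apply (dist_le _ _ _ _ Hd); replace (D + (e + e))%nat with (e + D + e)%nat by lia.
    rewrite <- (act_inv gi g infty g_gi infty_vertex); fold u.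
    apply path_act; [assumption |].
    eapply path_app; [eapply path_app; [apply path_rev, Hu | apply HD] | exact HXY].
  - (* pull the geodesic back by gi, then go infty -> u -> Y -> X *)
    apply (dist_le _ _ _ _ HD); replace (d + (e + e))%nat with (e + d + e)%nat by lia.
    assert (Hp : farey_path d u Y).
    { rewrite <- (act_inv g gi Y gi_g).
      - apply path_act; [assumption | apply Hd].
      - apply iter_vertex, act_vertex, infty_vertex; assumption. }
    eapply path_app; [eapply path_app; [exact Hu | exact Hp] | apply path_rev, HXY].
Qed.

Lemma conj_trace : mat2_tr (mat2_mul g (mat2_mul A gi)) = mat2_tr A.
Proof. rewrite mat2_tr_comm, <- mat2_mul_assoc, gi_g, mat2_mul_id_r; reflexivity. Qed.

End Conjugate.

Lemma positive_trace_representative (f : mat2) :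
  in_SL2Z f -> anosov f ->
  exists f0, mat2_det f0 = 1 /\ mat2_tr f0 = Z.abs (mat2_tr f) /\
    3 <= mat2_tr f0 /\ forall v, mat2_act f v = mat2_act f0 v.
Proof.
  unfold in_SL2Z, anosov; intros Hdet Han.
  destruct (Z_le_gt_dec 0 (mat2_tr f)).
  - exists f; repeat split; [assumption | lia .. ].
  - exists (mat2_opp f); destruct f as [a b c d]; unfold mat2_det, mat2_tr, mat2_opp in *.
    cbn [ma mb mc md] in *; repeat split; [lia .. |].
    intros v; symmetry; exact (act_opp (Mat2 a b c d) v).
Qed.

Lemma anosov_normal_form (f : mat2) :
  in_SL2Z f -> anosov f ->
  exists g gi w, mat2_mul g gi = mat2_id /\ mat2_mul gi g = mat2_id /\
    mat2_det g = 1 /\ mat2_det gi = 1 /\ moves_infty_finitely g /\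
    (forall v, mat2_act f v = mat2_act g (mat2_act (word_mat w) (mat2_act gi v))) /\
    mat2_tr (word_mat w) = Z.abs (mat2_tr f) /\ w <> [].
Proof.
  intros Hdet Han.
  destruct (positive_trace_representative f Hdet Han) as (f0 & Hd0 & Ht0 & Hpos & Hact).
  destruct (reduction f0 Hd0 Hpos)
    as (g & gi & A & Hggi & Hgig & Hdg & Hdgi & HfA & HnnA & HdA & Hg).
  destruct (nonneg_is_word A HnnA HdA) as [w <-].
  assert (Htr : mat2_tr (word_mat w) = Z.abs (mat2_tr f))
    by (rewrite <- Ht0, HfA; symmetry; apply conj_trace; assumption).
  exists g, gi, w; repeat (split; [assumption |]); split; [| split; [assumption |]].
  - intros v; rewrite Hact, HfA, !act_mul; reflexivity.
  - intros ->; unfold anosov in Han; change (2 = Z.abs (mat2_tr f)) in Htr; lia.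
Qed.

Open Scope R_scope.

Theorem mainTheorem14 (f : mat2) (l : R) :
  in_SL2Z f -> anosov f -> stable_translation_length f l ->
  exists n : nat, l = INR n /\
    (Z.abs (mat2_tr f) >= mat2_tr (mat2_pow M2 n))%Z /\
    IZR (mat2_tr (mat2_pow M2 n)) = (1 + sqrt 2) ^ n + (1 - sqrt 2) ^ n.
Proof.
  intros Hdet Han [d [Hd Hlim]].
  destruct (anosov_normal_form f Hdet Han)
    as (g & gi & w & Hggi & Hgig & Hdg & Hdgi & [e He] & Hconj & Htr & Hw).
  destruct (orbit_state_periodic w) as (n & Hper & Hlin).
  exists n; split; [| split; [| apply M2_trace_formula]].
  - (* d j = n j + O(1): compare with the orbit of the word, a pure shift *)
    apply (liminf_of_linear d l (INR n) (INR (fst (orbit_state w 2) + 2 * n + 2 * e))).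
    + exact Hlim.
    + intros j Hj.
      destruct (conjugate_orbit_dist f g gi (word_mat w) Hconj Hggi Hgig Hdg Hdgi
                  (word_mat_det w) e j (d j) _ He (Hd j) (word_orbit_dist w j)) as [H1 H2].
      assert (Hj' : orbit_state w j = state_shift (orbit_state w 2) (n * (j - 2)))
        by (rewrite <- Hlin; f_equal; lia).
      rewrite Hj' in H1, H2; unfold state_shift in H1, H2; cbn [fst] in H1, H2.
      rewrite <- mult_INR, <- !plus_INR; split; apply le_INR; nia.
  - rewrite M2_trace, <- Htr; apply Z.le_ge.
    exact (trace_of_periodic_word w _ n Hw (orbit_state_balanced w 2) Hper).
Qed.
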